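(* In the Com-IC model with $q_{\mathcal{A}|\emptyset}\le q_{\mathcal{A}|\mathcal{B}}$ and $q_{\mathcal{B}|\emptyset}=q_{\mathcal{B}|\mathcal{A}}$: (i) for any fixed $\mathcal{B}$-seed set $S_\mathcal{B}$, the set function $S_\mathcal{A}\mapsto\sigma_\mathcal{A}(S_\mathcal{A},S_\mathcal{B})$ is submodular; (ii) $\sigma_\mathcal{B}(S_\mathcal{A},S_\mathcal{B})$ does not depend on $S_\mathcal{A}$, and $S_\mathcal{B}\mapsto\sigma_\mathcal{B}(S_\mathcal{A},S_\mathcal{B})$ is submodular.
   Context: Com-IC model. Let $G=(V,E,p)$ be a directed graph with $p:E\to[0,1]$ and $N^-(v)$ the in-neighbours of $v$. Two items $\mathcal{A},\mathcal{B}$; GAPs $\mathbf{Q}=(q_{\mathcal{A}|\emptyset},q_{\mathcal{A}|\mathcal{B}},q_{\mathcal{B}|\emptyset},q_{\mathcal{B}|\mathcal{A}})\in[0,1]^4$. Given seed sets $S_\mathcal{A},S_\mathcal{B}\subseteq V$, randomness: each edge $(u,v)$ independently live w.p. $p(u,v)$; each node $v$ independently draws $\alpha^v_\mathcal{A},\alpha^v_\mathcal{B}$ uniform on $[0,1]$, a uniformly random permutation $\pi_v$ of $N^-(v)$, and a fair coin $\tau_v\in\{\mathcal{A},\mathcal{B}\}$. For each item $X$ each node is $X$-idle, $X$-suspended, $X$-adopted or $X$-rejected; initially all idle. At step $0$ nodes of $S_\mathcal{A}$ become $\mathcal{A}$-adopted and nodes of $S_\mathcal{B}$ become $\mathcal{B}$-adopted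 (order for nodes in both given by $\tau_v$). At step $t\ge1$, $v$ is informed of $X$ by in-neighbour $u$ if $(u,v)$ is live and $u$ adopted $X$ at step $t-1$; informing in-neighbours are processed in order $\pi_v$ (an in-neighbour that adopted both items is processed for both, in its adoption order). When $v$ is informed of $X$ ($Y$ the other item) while $X$-idle: if $Y$-adopted, $v$ becomes $X$-adopted if $\alpha^v_X\le q_{X|Y}$, else $X$-rejected; otherwise $X$-adopted if $\alpha^v_X\le q_{X|\emptyset}$, else $X$-suspended. Informing a non-$X$-idle node of $X$ has no effect. Reconsideration: when an $X$-suspended node becomes $Y$-adopted, it becomes $X$-adopted if $\alpha^v_X\le q_{X|Y}$, else $X$-rejected. The process stops when nothing changes. $\sigma_\mathcal{A}(S_\mathcal{A},S_\mathcal{B})$, $\sigma_\mathcal{B}(S_\mathcal{A},S_\mathcal{B})$ are the expected final numbers of $\mathcal{A}$-adopted, resp. $\mathcal{B}$-adopted, nodes. A set function $f$ on $2^V$ is submodular if $f(S\cup\{x\})-f(S)\ge f(T\cup\{x\})-f(T)$ for all $S\subseteq T\subseteq V$, $x\in V\setminus T$. *)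

From HB Require Import structures.
From mathcomp Require Import all_boot all_order all_algebra all_fingroup.
Set Implicit Arguments. Unset Strict Implicit. Unset Printing Implicit Defensive.
Import Order.TTheory GRing.Theory Num.Theory.
Local Open Scope ring_scope.

(* Items: true = item A, false = item B.  The "other item" of X is ~~ X. *)
Definition itemA : bool := true.
Definition itemB : bool := false.

Inductive status := Idle | Susp | Adopt | Rej.

Definition is_idle s := if s is Idle then true else false.
Definition is_susp s := if s is Susp then true else false.
Definition is_adopt s := if s is Adopt then true else false.

Section ComIC.
Variable R : realFieldType.
Variable V : finType.
Variable E : rel V.
Variable p : V -> V -> R.
Variables qA0 qAB qB0 qBA : R.

Definition qe (X : bool) : R := if X then qA0 else qB0.
Definition qc (X : bool) : R := if X then qAB else qBA.

Definition upd (s : bool -> status) (X : bool) (t : status) : bool -> status :=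
  fun Z => if Z == X then t else s Z.

(* node-local state: statuses for both items, items adopted in the current
   step (in adoption order) *)
Definition lstate := ((bool -> status) * seq bool)%type.

Section Node.
Variable al : bool -> R.

Definition adopt_item (X : bool) (st : lstate) : lstate :=
  let s1 := upd st.1 X Adopt in
  let nl1 := rcons st.2 X in
  if is_susp (s1 (~~ X)) then
    (if al (~~ X) <= qc (~~ X) then (upd s1 (~~ X) Adopt, rcons nl1 (~~ X))
     else (upd s1 (~~ X) Rej, nl1))
  else (s1, nl1).

Definition inform (st : lstate) (X : bool) : lstate :=
  if is_idle (st.1 X) then
    if is_adopt (st.1 (~~ X)) then
      (if al X <= qc X then adopt_item X st else (upd st.1 X Rej, st.2))
    else
      (if al X <= qe X then adopt_item X st else (upd st.1 X Susp, st.2))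
  else st.

Definition process (s : bool -> status) (evs : seq bool) : lstate :=
  foldl inform (s, [::]) evs.
End Node.

(* global state: statuses, and items each node adopted at the previous step *)
Definition gstate := ((V -> bool -> status) * (V -> seq bool))%type.

Definition seed_items (SA SB : {set V}) (tau : {ffun V -> bool}) (v : V)
  : seq bool :=
  if (v \in SA) && (v \in SB) then
    (if tau v then [:: itemA; itemB] else [:: itemB; itemA])
  else if v \in SA then [:: itemA]
  else if v \in SB then [:: itemB]
  else [::].

Definition init_state (SA SB : {set V}) (tau : {ffun V -> bool}) : gstate :=
  (fun v X => if X \in seed_items SA SB tau v then Adopt else Idle,
   seed_items SA SB tau).

(* live in-neighbours of v in the order given by the random permutation pi_v
   (uniformly random permutation of V restricted to N^-(v)) *)
Definition informers (L : {set V * V}) (pi : {ffun V -> {perm V}}) (v : V)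
  : seq V :=
  sort (fun u w => (enum_rank (pi v u) <= enum_rank (pi v w))%N)
       [seq u <- enum V | E u v && ((u, v) \in L)].

Definition step (L : {set V * V}) (al : V -> bool -> R)
  (pi : {ffun V -> {perm V}}) (g : gstate) : gstate :=
  let res := fun v =>
    process (al v) (g.1 v) (flatten [seq g.2 u | u <- informers L pi v]) in
  (fun v => (res v).1, fun v => (res v).2).

(* Each step t >= 1 that changes anything follows a step with at least one new
   adoption; there are at most 2|V| adoptions, so 2|V|+1 steps reach the
   final (stable) state. *)
Definition final_state L al pi SA SB tau : gstate :=
  iter (#|V|.*2.+1) (step L al pi) (init_state SA SB tau).

(* alpha: the process only compares alpha^v_X with q_{X|0} and q_{X|Y};
   [0,1] is cut into [0,m], (m,M], (M,1] (m = min, M = max of the two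
   thresholds); the representative (right endpoint) and probability of each
   cell are given below. *)
Definition amin X : R := Num.min (qe X) (qc X).
Definition amax X : R := Num.max (qe X) (qc X).
Definition arep (X : bool) (i : 'I_3) : R :=
  match val i with 0%N => amin X | 1%N => amax X | _ => 1 end.
Definition aprob (X : bool) (i : 'I_3) : R :=
  match val i with 0%N => amin X | 1%N => amax X - amin X | _ => 1 - amax X end.

Definition live_prob (L : {set V * V}) : R :=
  \prod_(e : V * V)
    (if E e.1 e.2 then (if e \in L then p e.1 e.2 else 1 - p e.1 e.2)
     else (if e \in L then 0 else 1)).

Definition alpha_prob (a : {ffun V * bool -> 'I_3}) : R :=
  \prod_(k : V * bool) aprob k.2 (a k).

Definition alpha_of (a : {ffun V * bool -> 'I_3}) : V -> bool -> R :=
  fun v X => arep X (a (v, X)).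

Definition perm_prob : R := (#|V|`!%:R ^+ #|V|)^-1.
Definition coin_prob : R := (2%:R ^+ #|V|)^-1.

Definition nadopt (X : bool) (g : gstate) : nat :=
  #|[set v | is_adopt (g.1 v X)]|.

Definition sigma (X : bool) (SA SB : {set V}) : R :=
  \sum_(L : {set V * V}) \sum_(a : {ffun V * bool -> 'I_3})
  \sum_(pi : {ffun V -> {perm V}}) \sum_(tau : {ffun V -> bool})
    live_prob L * alpha_prob a * perm_prob * coin_prob *
    (nadopt X (final_state L (alpha_of a) pi SA SB tau))%:R.

End ComIC.

Definition submodular (R : realFieldType) (V : finType) (f : {set V} -> R) :=
  forall (S T : {set V}) (x : V), S \subset T -> x \notin T ->
    f (x |: T) - f T <= f (x |: S) - f S.

(* If q_{B|0} = q_{B|A}, a node decides on B without looking at A, so in every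
   possible world (live edges, thresholds alpha) the final B-adopters are the
   nodes reachable from S_B along live edges into nodes with alpha_B <= q_{B|0}.
   Given them, q_{A|0} <= q_{A|B} makes the A-decision of a node independent of
   when it adopts B, so the final A-adopters are the nodes reachable from S_A
   along live edges into nodes with alpha_A <= q_{A|0}, or alpha_A <= q_{A|B} and
   B-adopted.  Both counts are coverage functions of the seed set, hence
   submodular; the B count does not involve S_A; and sigma is a nonnegative
   combination of such counts. *)

From HB Require Import structures.
From mathcomp Require Import all_boot all_order all_algebra all_fingroup.
Import Order.TTheory GRing.Theory Num.Theory.
Local Open Scope ring_scope.
Set Implicit Arguments. Unset Strict Implicit.

Definition status_le (a b : status) : bool :=
  match a, b with
  | Idle, _ => true
  | Susp, Idle => false
  | Susp, _ => true
  | Adopt, Adopt | Rej, Rej => true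
  | _, _ => false
  end.

Lemma status_le_refl a : status_le a a. Proof. by case: a. Qed.

Lemma status_le_trans a b c : status_le a b -> status_le b c -> status_le a c.
Proof. by case: a; case: b; case: c. Qed.

Lemma status_le_adopt a b : status_le a b -> is_adopt a -> is_adopt b.
Proof. by case: a; case: b. Qed.

Lemma status_le_idle a b : status_le a b -> ~~ is_idle a -> ~~ is_idle b.
Proof. by case: a; case: b. Qed.

Section NodeInvariant.
Variables (R : realFieldType) (qA0 qAB qB0 qBA : R).
Hypotheses (hA : qA0 <= qAB) (hB : qB0 = qBA).
Variable al : bool -> R.
Variables (informedA informedB inA inB : bool).
Hypothesis acceptB : informedB -> al false <= qB0 -> inB.
Hypothesis acceptA :
  informedA -> (al true <= qA0) || (al true <= qAB) && inB -> inA.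

(* informedX: v has been informed of X; inX: v lies in the predicted X-adopter set. *)
Definition node_invA (a b : status) : Prop :=
  match a with
  | Idle => True
  | Susp => [/\ informedA, ~~ (al true <= qA0) & ~~ is_adopt b]
  | Adopt => informedA /\ inA
  | Rej => informedA /\ ~~ (al true <= qAB)
  end.

Definition node_invB (b : status) : Prop :=
  match b with
  | Idle => True
  | Adopt => informedB /\ inB
  | _ => informedB /\ ~~ (al false <= qB0)
  end.

Definition node_inv (s : bool -> status) :=
  node_invA (s true) (s false) /\ node_invB (s false).

Lemma node_inv_inform st X :
  node_inv st.1 -> (if X then informedA else informedB) ->
  node_inv (inform qA0 qAB qB0 qBA al st X).1.
Proof.
case: st => s nl; rewrite /node_inv /inform /adopt_item /upd /qc /qe -hB /=.
have rejA : ~~ (al true <= qAB) -> ~~ (al true <= qA0).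
  by apply: contra => h; apply: le_trans hA.
case: X => /= -[IA IB] hX; case EA: (s true) IA; case EB: (s false) IB => /= IB IA;
  do ?[case: ifP => ? /=]; rewrite /= ?EA ?EB /=;
  repeat match goal with
         | H : _ /\ _ |- _ => destruct H
         | H : [/\ _, _ & _] |- _ => destruct H
         end;
  repeat match goal with |- _ /\ _ => split | |- [/\ _, _ & _] => split end;
  try done.
all: try by apply/negbT.
all: try by apply: rejA; apply/negbT.
all: try by apply: acceptB.
all: apply: acceptA => //; apply/orP.
all: try by left.
all: by right; apply/andP; split => //; apply: acceptB.
Qed.

Lemma node_inv_foldl st evs :
  node_inv st.1 -> (forall X, X \in evs -> if X then informedA else informedB) ->
  node_inv (foldl (inform qA0 qAB qB0 qBA al) st evs).1.
Proof.
elim: evs st => [|X evs IH] st //= inv_st hevs.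
apply: IH => [|Y Yevs]; last by apply: hevs; rewrite in_cons Yevs orbT.
by apply: node_inv_inform => //; apply: hevs; rewrite mem_head.
Qed.

End NodeInvariant.

Section NodeProgress.
Variables (R : realFieldType) (qA0 qAB qB0 qBA : R) (al : bool -> R).
Local Notation inf := (inform qA0 qAB qB0 qBA al).

Lemma inform_progress st X :
  [/\ forall Z, status_le (st.1 Z) ((inf st X).1 Z),
      ~~ is_idle ((inf st X).1 X) &
      forall Z, (Z \in (inf st X).2) =
        (Z \in st.2) || is_adopt ((inf st X).1 Z) && ~~ is_adopt (st.1 Z)].
Proof.
case: st => s nl; rewrite /inform /adopt_item /upd /=.
case: X; case EA: (s true); case EB: (s false) => /=;
  do ?[case: ifP => ? /=]; rewrite /= ?EA ?EB /=; split => //;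
  try (case => /=; rewrite ?EA ?EB //=);
  rewrite ?mem_rcons ?in_cons ?orbF ?orbT //= ?orbA ?orbF;
  try (by case: (_ \in nl)); try (by rewrite mem_rcons mem_head).
Qed.

Lemma foldl_inform_progress st evs : let st' := foldl inf st evs in
  [/\ forall Z, status_le (st.1 Z) (st'.1 Z),
      forall X, X \in evs -> ~~ is_idle (st'.1 X) &
      forall Z, (Z \in st'.2) =
        (Z \in st.2) || is_adopt (st'.1 Z) && ~~ is_adopt (st.1 Z)].
Proof.
elim: evs st => [|X evs IH] st /=.
  by split => // Z; [exact: status_le_refl | rewrite andbN orbF].
have [le1 idle1 news1] := inform_progress st X.
have [le2 idle2 news2] := IH (inf st X).
split=> [Z | Y | Z].
- exact: status_le_trans (le1 Z) (le2 Z).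
- by rewrite in_cons => /predU1P [-> | /idle2 //]; exact: status_le_idle (le2 X) idle1.
- rewrite news2 news1 -orbA; congr (_ || _).
  have mid : is_adopt (st.1 Z) ==> is_adopt ((inf st X).1 Z).
    exact/implyP/status_le_adopt/le1.
  have fin : is_adopt ((inf st X).1 Z) ==> is_adopt ((foldl inf (inf st X) evs).1 Z).
    exact/implyP/status_le_adopt/le2.
  by move: mid fin; case: (is_adopt (st.1 Z)); case: (is_adopt ((inf st X).1 Z));
    case: (is_adopt _).
Qed.

Lemma process_progress s evs : let st' := process qA0 qAB qB0 qBA al s evs in
  [/\ forall Z, status_le (s Z) (st'.1 Z),
      forall X, X \in evs -> ~~ is_idle (st'.1 X) &
      forall Z, (Z \in st'.2) = is_adopt (st'.1 Z) && ~~ is_adopt (s Z)].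
Proof. by have [? ? news] := foldl_inform_progress (s, [::]) evs; split. Qed.

End NodeProgress.

Section Reach.
Variables (V : finType) (r : rel V).

Definition reach (S : {set V}) := [set v | [exists u in S, connect r u v]].

Lemma reach_seed (S : {set V}) u : u \in S -> u \in reach S.
Proof. by move=> uS; rewrite inE; apply/exists_inP; exists u. Qed.

Lemma reach_step (S : {set V}) u v : u \in reach S -> r u v -> v \in reach S.
Proof.
rewrite !inE => /exists_inP [w wS wu] uv; apply/exists_inP; exists w => //.
exact: connect_trans wu (connect1 uv).
Qed.

Lemma reach_min (S T : {set V}) : S \subset T ->
  (forall u v, u \in T -> r u v -> v \in T) -> reach S \subset T.
Proof.
move=> sST closedT; apply/subsetP => v.
rewrite inE => /exists_inP [u /(subsetP sST) uT /connectP [path_uv ruv ->]].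
elim: path_uv u uT ruv => [|w path IH] u uT //= /andP [/(closedT _ _ uT) wT].
exact: IH.
Qed.

Lemma reach_subset (S T : {set V}) : S \subset T -> reach S \subset reach T.
Proof.
move=> sST; apply/subsetP => v; rewrite !inE => /exists_inP [u uS uv].
by apply/exists_inP; exists u => //; apply: (subsetP sST).
Qed.

Lemma reachU1 x (S : {set V}) : reach (x |: S) = reach [set x] :|: reach S.
Proof.
apply/setP => v; rewrite !inE; apply/exists_inP/orP => [[u] | [] /exists_inP [u]].
- rewrite !inE => /predU1P [-> | uS] uv; [left | right]; apply/exists_inP.
    by exists x; rewrite ?inE.
  by exists u.
- by rewrite inE => /eqP -> xv; exists x; rewrite // !inE eqxx.
- by move=> uS uv; exists u; rewrite // !inE uS orbT.
Qed.

End Reach.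

Lemma submodular_eq (R : realFieldType) (V : finType) (f g : {set V} -> R) :
  f =1 g -> submodular f -> submodular g.
Proof. by move=> fg subf S T x sST xT; rewrite -!fg; exact: subf. Qed.

Lemma submodular_sum (R : realFieldType) (V : finType) (I : finType)
  (F : I -> {set V} -> R) :
  (forall i, submodular (F i)) -> submodular (fun S => \sum_i F i S).
Proof.
by move=> subF S T x sST xT; rewrite -!sumrB; apply: ler_sum => i _; exact: subF.
Qed.

Lemma submodular_scale (R : realFieldType) (V : finType) (w : R)
  (f : {set V} -> R) :
  0 <= w -> submodular f -> submodular (fun S => w * f S).
Proof.
by move=> w0 subf S T x sST xT; rewrite -!mulrBr; apply: ler_wpM2l => //; exact: subf.
Qed.

(* Coverage: the nodes newly reached from x are reach [set x] minus reach S. *)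
Lemma submodular_card_reach (R : realFieldType) (V : finType) (r : rel V) :
  submodular (fun S => #|reach r S|%:R : R).
Proof.
move=> S T x sST _; rewrite !reachU1.
set C := reach r [set x].
have gain (Y : {set V}) : (#|C :|: Y|%:R - #|Y|%:R : R) = #|C|%:R - #|C :&: Y|%:R.
  by apply/eqP; rewrite subr_eq addrAC eq_sym subr_eq -!natrD cardsUI.
rewrite !gain lerD2l lerN2 ler_nat; apply/subset_leq_card/setIS.
exact: reach_subset.
Qed.

Section Dynamics.
Variables (R : realFieldType) (V : finType) (E : rel V) (qA0 qAB qB0 qBA : R).
Hypotheses (hA : qA0 <= qAB) (hB : qB0 = qBA).
Variables (L : {set V * V}) (al : V -> bool -> R) (pi : {ffun V -> {perm V}}).
Variables (SA SB : {set V}) (tau : {ffun V -> bool}).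

Definition live u v := E u v && ((u, v) \in L).

Definition Bset := reach [rel u v | live u v && (al v false <= qB0)] SB.
Definition acceptsA v := (al v true <= qA0) || (al v true <= qAB) && (v \in Bset).
Definition Aset := reach [rel u v | live u v && acceptsA v] SA.

Definition informedA v := (v \in SA) || [exists u, live u v && (u \in Aset)].
Definition informedB v := (v \in SB) || [exists u, live u v && (u \in Bset)].

Lemma acceptB_at v : informedB v -> al v false <= qB0 -> v \in Bset.
Proof.
case/orP => [/reach_seed -> // | /existsP [u /andP [uv uB]] h].
by apply: reach_step uB _; rewrite /= uv h.
Qed.

Lemma acceptA_at v : informedA v -> acceptsA v -> v \in Aset.
Proof.
case/orP => [/reach_seed -> // | /existsP [u /andP [uv uA]] h].
by apply: reach_step uA _; rewrite /= uv.
Qed.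

Local Notation stp := (step E qA0 qAB qB0 qBA L al pi).

Definition events (g : gstate V) v := flatten [seq g.2 u | u <- informers E L pi v].

Lemma mem_informers u v : (u \in informers E L pi v) = live u v.
Proof. by rewrite mem_sort mem_filter mem_enum andbT. Qed.

Lemma mem_events g v X : (X \in events g v) = [exists u, live u v && (X \in g.2 u)].
Proof.
apply/flatten_mapP/existsP => [[u] | [u /andP [uv Xu]]].
  by rewrite mem_informers => uv Xu; exists u; rewrite uv.
by exists u; rewrite ?mem_informers.
Qed.

Lemma step_status_le g v Z : status_le (g.1 v Z) ((stp g).1 v Z).
Proof.
have [le _ _] := process_progress qA0 qAB qB0 qBA (al v) (g.1 v) (events g v).
exact: le.
Qed.

Lemma step_informed g v X : X \in events g v -> ~~ is_idle ((stp g).1 v X).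
Proof.
have [_ idle _] := process_progress qA0 qAB qB0 qBA (al v) (g.1 v) (events g v).
exact: idle.
Qed.

Lemma step_news g v Z :
  (Z \in (stp g).2 v) = is_adopt ((stp g).1 v Z) && ~~ is_adopt (g.1 v Z).
Proof.
have [_ _ news] := process_progress qA0 qAB qB0 qBA (al v) (g.1 v) (events g v).
exact: news.
Qed.

Lemma step_news_nil g v : events g v = [::] -> (stp g).2 v = [::].
Proof. by rewrite /stp /step /= /events => ->. Qed.

Definition consistent (g : gstate V) :=
  (forall v, node_inv qA0 qAB qB0 (al v) (informedA v) (informedB v)
               (v \in Aset) (v \in Bset) (g.1 v)) /\
  (forall v Z, Z \in g.2 v -> is_adopt (g.1 v Z)).

Lemma mem_seed_items v X :
  (X \in seed_items SA SB tau v) = if X then v \in SA else v \in SB.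
Proof.
by rewrite /seed_items; case: X (v \in SA) (v \in SB) (tau v) => [] [] [] [].
Qed.

Lemma consistent_init : consistent (init_state SA SB tau).
Proof.
split=> [v | v Z /= ->] //; rewrite /node_inv /= !mem_seed_items /informedA /informedB.
by case vA: (v \in SA); case vB: (v \in SB); do ![split] => //; apply: reach_seed.
Qed.

Lemma consistent_adoptA g u : consistent g -> is_adopt (g.1 u true) -> u \in Aset.
Proof. by case=> /(_ u) []; case: (g.1 u true) => // - []. Qed.

Lemma consistent_adoptB g u : consistent g -> is_adopt (g.1 u false) -> u \in Bset.
Proof. by case=> /(_ u) [_]; case: (g.1 u false) => // - []. Qed.

Lemma consistent_step g : consistent g -> consistent (stp g).
Proof.
move=> cg; split=> [v | v Z]; last by rewrite step_news => /andP [].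
apply: (node_inv_foldl hA hB (@acceptB_at v) (@acceptA_at v)) => [|X].
  exact: cg.1.
rewrite -/(events g v) mem_events => /existsP [u /andP [uv /cg.2]].
by case: X => [/(consistent_adoptA cg) | /(consistent_adoptB cg)] uX;
  apply/orP; right; apply/existsP; exists u; rewrite uv.
Qed.

Definition state t := iter t stp (init_state SA SB tau).
Local Notation final := (state #|V|.*2.+1).

Lemma consistent_state t : consistent (state t).
Proof. by elim: t => [|t IH]; [exact: consistent_init | exact: consistent_step]. Qed.

Lemma state_status_le t k v Z : status_le ((state t).1 v Z) ((state (k + t)).1 v Z).
Proof.
elim: k => [|k IH]; first exact: status_le_refl.
exact: status_le_trans IH (step_status_le _ _ _).
Qed.

Definition adopted (g : gstate V) := [set k : V * bool | is_adopt (g.1 k.1 k.2)].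

Lemma news_bound t v Z : Z \in (state t).2 v -> (t < #|adopted (state t)|)%N.
Proof.
elim: t v Z => [v Z Zv | t IH v Z].
  by apply/card_gt0P; exists (v, Z); rewrite inE /= Zv.
rewrite /state iterS -/(state t) => Znew.
case Ev: (events (state t) v) => [|Y evs]; first by rewrite step_news_nil in Znew.
have : Y \in events (state t) v by rewrite Ev mem_head.
rewrite mem_events => /existsP [u /andP [_ /IH earlier]].
apply: leq_ltn_trans earlier _; apply: proper_card; apply/properP; split.
  by apply/subsetP => -[w W]; rewrite !inE; apply/status_le_adopt/step_status_le.
by exists (v, Z); rewrite !inE /=; move: Znew; rewrite step_news => /andP [].
Qed.

Lemma adoption_time t u X :
  is_adopt ((state t).1 u X) -> exists2 t', (t' <= t)%N & X \in (state t').2 u.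
Proof.
elim: t => [|t IH] adopt_t; first by exists 0%N; move: adopt_t => /=; case: ifP.
case adopt_prev: (is_adopt ((state t).1 u X)).
  by have [t' le_t' news] := IH adopt_prev; exists t' => //; apply: leqW.
by exists t.+1 => //; rewrite /state iterS step_news -/(state t) adopt_prev andbT.
Qed.

(* News stop before step 2|V|, so the final state has reacted to every adoption. *)
Lemma final_informed u v X :
  is_adopt (final.1 u X) -> live u v -> ~~ is_idle (final.1 v X).
Proof.
move=> /adoption_time [t _ news_t] uv.
have lt_t : (t < #|V|.*2)%N.
  apply: leq_trans (news_bound news_t) _.
  by rewrite -muln2 -(card_bool) -card_prod max_card.
have informed_next : ~~ is_idle ((state t.+1).1 v X).
  by apply: step_informed; rewrite mem_events; apply/existsP; exists u; rewrite uv.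
have := state_status_le t.+1 (#|V|.*2 - t) v X.
by rewrite addnS subnK ?(ltnW lt_t) // => /status_le_idle; apply.
Qed.

Lemma seed_adopted_final v X :
  (if X then v \in SA else v \in SB) -> is_adopt (final.1 v X).
Proof.
move=> seed; have := state_status_le 0 #|V|.*2.+1 v X.
by rewrite addn0 => /status_le_adopt; apply; rewrite /= mem_seed_items seed.
Qed.

Lemma Bset_adopted_final v : v \in Bset -> is_adopt (final.1 v false).
Proof.
suff /subsetP sub : Bset \subset [set v | is_adopt (final.1 v false)].
  by move=> /sub; rewrite inE.
apply: reach_min => [|u w].
  by apply/subsetP => w wSB; rewrite inE seed_adopted_final.
rewrite !inE => adopt_u /andP [uw accept_w].
have := final_informed adopt_u uw.
have [_ invB] := (consistent_state #|V|.*2.+1).1 w.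
by case: (final.1 w false) invB => // - [_]; rewrite accept_w.
Qed.

Lemma Aset_adopted_final v : v \in Aset -> is_adopt (final.1 v true).
Proof.
suff /subsetP sub : Aset \subset [set v | is_adopt (final.1 v true)].
  by move=> /sub; rewrite inE.
apply: reach_min => [|u w].
  by apply/subsetP => w wSA; rewrite inE seed_adopted_final.
rewrite !inE => adopt_u /andP [uw accept_w].
have := final_informed adopt_u uw.
have [invA _] := (consistent_state #|V|.*2.+1).1 w.
move: accept_w; rewrite /acceptsA.
case: (final.1 w true) invA => // - [].
- move=> _ /negbTE -> notB /= /andP [_ /Bset_adopted_final].
  by rewrite (negbTE notB).
- by move=> _ /negbTE rej; rewrite rej andFb orbF => /le_trans /(_ hA); rewrite rej.
Qed.

Lemma nadoptB_final :
  nadopt itemB (final_state E qA0 qAB qB0 qBA L al pi SA SB tau) = #|Bset|.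
Proof.
apply: eq_card => v; rewrite inE; apply/idP/idP; last exact: Bset_adopted_final.
exact: consistent_adoptB (consistent_state _).
Qed.

Lemma nadoptA_final :
  nadopt itemA (final_state E qA0 qAB qB0 qBA L al pi SA SB tau) = #|Aset|.
Proof.
apply: eq_card => v; rewrite inE; apply/idP/idP; last exact: Aset_adopted_final.
exact: consistent_adoptA (consistent_state _).
Qed.

End Dynamics.

Section Expectation.
Variables (R : realFieldType) (V : finType) (E : rel V) (p : V -> V -> R).
Variables (qA0 qAB qB0 qBA : R).
Hypothesis hp : forall u v, 0 <= p u v <= 1.
Hypotheses (hqA0 : 0 <= qA0 <= 1) (hqAB : 0 <= qAB <= 1).
Hypotheses (hqB0 : 0 <= qB0 <= 1) (hqBA : 0 <= qBA <= 1).

Lemma aprob_ge0 X i : 0 <= aprob qA0 qAB qB0 qBA X i.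
Proof.
have /andP [e0 e1] : 0 <= qe qA0 qB0 X <= 1 by case: X.
have /andP [c0 c1] : 0 <= qc qAB qBA X <= 1 by clear e0 e1; case: X.
rewrite /aprob /amin /amax; case: i => [[|[|[|n]]] ?] //=.
- by rewrite le_min e0 c0.
- by rewrite subr_ge0 (le_trans (y := qe qA0 qB0 X)) ?ge_min ?le_max ?lexx.
- by rewrite subr_ge0 ge_max e1 c1.
Qed.

Lemma weight_ge0 L (a : {ffun V * bool -> 'I_3}) :
  0 <= live_prob E p L * alpha_prob qA0 qAB qB0 qBA a * perm_prob R V * coin_prob R V.
Proof.
rewrite !mulr_ge0 ?invr_ge0 ?exprn_ge0 ?ler0n //.
- apply: prodr_ge0 => e _; have /andP [p0 p1] := hp e.1 e.2.
  by case: (E e.1 e.2); case: (e \in L); rewrite ?subr_ge0.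
- by apply: prodr_ge0 => k _; apply: aprob_ge0.
Qed.

Lemma submodular_sigma X (seeds : {set V} -> {set V} * {set V}) :
  (forall L a pi tau, submodular (fun S => (nadopt X (final_state E qA0 qAB qB0 qBA
     L (alpha_of qA0 qAB qB0 qBA a) pi (seeds S).1 (seeds S).2 tau))%:R : R)) ->
  submodular (fun S => sigma E p qA0 qAB qB0 qBA X (seeds S).1 (seeds S).2).
Proof.
move=> sub_nadopt; rewrite /sigma.
do 4!apply: submodular_sum => ?.
exact: submodular_scale (weight_ge0 _ _) (sub_nadopt _ _ _ _).
Qed.

End Expectation.

Theorem theorem4 (R : realFieldType) (V : finType) (E : rel V)
  (p : V -> V -> R) (qA0 qAB qB0 qBA : R)
  (hp : forall u v, 0 <= p u v <= 1)
  (hqA0 : 0 <= qA0 <= 1) (hqAB : 0 <= qAB <= 1)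
  (hqB0 : 0 <= qB0 <= 1) (hqBA : 0 <= qBA <= 1)
  (hA : qA0 <= qAB) (hB : qB0 = qBA) :
  (forall SB : {set V},
     submodular (fun SA => sigma E p qA0 qAB qB0 qBA itemA SA SB)) /\
  ((forall SA SA' SB : {set V},
      sigma E p qA0 qAB qB0 qBA itemB SA SB =
      sigma E p qA0 qAB qB0 qBA itemB SA' SB) /\
   (forall SA : {set V},
      submodular (fun SB => sigma E p qA0 qAB qB0 qBA itemB SA SB))).
Proof.
split; [|split].
- move=> SB.
  apply: (submodular_sigma (seeds := fun S => (S, SB)) hp hqA0 hqAB hqB0 hqBA).
  move=> L a pi tau; apply: submodular_eq (submodular_card_reach _ _) => SA /=.
  by rewrite (nadoptA_final _ hA hB).
- move=> SA SA' SB; rewrite /sigma; do 4!apply: eq_bigr => ? _.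
  by rewrite !(nadoptB_final _ hA hB).
- move=> SA.
  apply: (submodular_sigma (seeds := fun S => (SA, S)) hp hqA0 hqAB hqB0 hqBA).
  move=> L a pi tau; apply: submodular_eq (submodular_card_reach _ _) => SB /=.
  by rewrite (nadoptB_final _ hA hB).
Qed.
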